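(* Let $K$ be a field, $\kappa$ an infinite cardinal and $\mathcal R=(R_\alpha\mid\alpha<\kappa)$ a sequence of $K$-algebras. If $R_\alpha\in\mathfrak R_K$ for each $\alpha<\kappa$, then $R(\kappa,K,\mathcal R)\in\mathfrak R_K$.
   Context: $R(\kappa,K,\mathcal R)$ denotes the $K$-subalgebra $I\oplus1_P\cdot K$ of $P=\prod_{\alpha<\kappa}R_\alpha$, where $I=\bigoplus_{\alpha<\kappa}R_\alpha$. Socle sequence: $S_0=0$, $S_{\alpha+1}/S_\alpha=\mathrm{Soc}(R/S_\alpha)$, unions at limits; semiartinian of Loewy length $\sigma+1$ means $S_{\sigma+1}=R\neq S_\sigma$; layers $L_\alpha=S_{\alpha+1}/S_\alpha$. $K^{(\lambda)}$ is the direct sum of $\lambda$ copies of $K$ as a $K$-algebra without unit. $\mathfrak R_K$ is the class of commutative von Neumann regular semiartinian $K$-algebras $R$ of Loewy length $\sigma+1$ such that for each $\alpha\le\sigma$ there is a cardinal $\lambda_\alpha>0$ and a $K$-linear isomorphism of $K$-algebras without unit $L_\alpha\cong K^{(\lambda_\alpha)}$. *)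

From HB Require Import structures.
From mathcomp Require Import all_boot all_algebra.
From mathcomp Require Import boolp classical_sets cardinality.
Set Implicit Arguments.
Unset Strict Implicit.
Unset Printing Implicit Defensive.
Import GRing.Theory.
Local Open Scope ring_scope.
Local Open Scope classical_set_scope.

(* (componentwise operations).  The index type is pointed only so that  *)
(* P can be given MathComp's (nontrivial) ring structure; the index set *)
(* of the theorem is infinite, hence inhabited, so this is harmless.    *)
Section DProd.
Variables (K : fieldType) (I : pointedType) (R : I -> algType K).

Definition dprod := forall i, R i.

HB.instance Definition _ := gen_eqMixin dprod.
HB.instance Definition _ := gen_choiceMixin dprod.

Definition dp_zero : dprod := fun i => 0.
Definition dp_opp (x : dprod) : dprod := fun i => - x i.
Definition dp_add (x y : dprod) : dprod := fun i => x i + y i.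
Definition dp_one : dprod := fun i => 1.
Definition dp_mul (x y : dprod) : dprod := fun i => x i * y i.
Definition dp_scale (k : K) (x : dprod) : dprod := fun i => k *: x i.

Let fe := @functional_extensionality_dep.

Lemma dp_addA : associative dp_add.
Proof. by move=> x y z; apply: fe => i; rewrite /dp_add addrA. Qed.
Lemma dp_addC : commutative dp_add.
Proof. by move=> x y; apply: fe => i; rewrite /dp_add addrC. Qed.
Lemma dp_add0 : left_id dp_zero dp_add.
Proof. by move=> x; apply: fe => i; rewrite /dp_add add0r. Qed.
Lemma dp_addN : left_inverse dp_zero dp_opp dp_add.
Proof. by move=> x; apply: fe => i; rewrite /dp_add /dp_opp addNr. Qed.

HB.instance Definition _ :=
  GRing.isZmodule.Build dprod dp_addA dp_addC dp_add0 dp_addN.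

Lemma dp_mulA : associative dp_mul.
Proof. by move=> x y z; apply: fe => i; rewrite /dp_mul mulrA. Qed.
Lemma dp_mul1 : left_id dp_one dp_mul.
Proof. by move=> x; apply: fe => i; rewrite /dp_mul mul1r. Qed.
Lemma dp_mulr1 : right_id dp_one dp_mul.
Proof. by move=> x; apply: fe => i; rewrite /dp_mul mulr1. Qed.
Lemma dp_mulDl : left_distributive dp_mul +%R.
Proof. by move=> x y z; apply: fe => i; rewrite /dp_mul mulrDl. Qed.
Lemma dp_mulDr : right_distributive dp_mul +%R.
Proof. by move=> x y z; apply: fe => i; rewrite /dp_mul mulrDr. Qed.
Lemma dp_one_neq0 : dp_one != 0.
Proof.
apply/eqP => /(congr1 (fun f : dprod => f point)).
by rewrite /dp_one => /eqP; rewrite oner_eq0.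
Qed.

HB.instance Definition _ :=
  GRing.Zmodule_isNzRing.Build dprod dp_mulA dp_mul1 dp_mulr1
    dp_mulDl dp_mulDr dp_one_neq0.

Lemma dp_scaleA a b v : dp_scale a (dp_scale b v) = dp_scale (a * b) v.
Proof. by apply: fe => i; rewrite /dp_scale scalerA. Qed.
Lemma dp_scale1 : left_id 1 dp_scale.
Proof. by move=> x; apply: fe => i; rewrite /dp_scale scale1r. Qed.
Lemma dp_scaleDr : right_distributive dp_scale +%R.
Proof. by move=> a x y; apply: fe => i; rewrite /dp_scale scalerDr. Qed.
Lemma dp_scaleDl v : {morph dp_scale^~ v : a b / a + b}.
Proof. by move=> a b; apply: fe => i; rewrite /dp_scale scalerDl. Qed.

HB.instance Definition _ :=
  GRing.Zmodule_isLmodule.Build K dprod dp_scaleA dp_scale1 dp_scaleDr dp_scaleDl.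

Lemma dp_scaleAl (a : K) (u v : dprod) : a *: (u * v) = (a *: u) * v.
Proof. by apply: fe => i; rewrite /GRing.scale /= /dp_scale /dp_mul scalerAl. Qed.

HB.instance Definition _ := GRing.Lmodule_isLalgebra.Build K dprod dp_scaleAl.

Lemma dp_scaleAr (a : K) (u v : dprod) : a *: (u * v) = u * (a *: v).
Proof. by apply: fe => i; rewrite /GRing.scale /= /dp_scale /dp_mul scalerAr. Qed.

HB.instance Definition _ := GRing.Lalgebra_isAlgebra.Build K dprod dp_scaleAr.

End DProd.

Definition Rkappa (K : fieldType) (I : pointedType) (R : I -> algType K)
  : set (dprod R) :=
  [set x | exists (k : K) (y : dprod R),
           finite_set [set i | y i != 0] /\ x = y + k *: 1].
Arguments Rkappa {K I} R _.

(* Ring-theoretic notions for a K-subalgebra S of an ambient K-algebra A *)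
(* (a K-algebra R is treated as the subalgebra [set: R] of itself).      *)
Section Class.
Variables (K : fieldType) (A : algType K).

Definition is_subalgebra (S : set A) : Prop :=
  [/\ S 1, (forall x y, S x -> S y -> S (x + y)), (forall x, S x -> S (- x)),
      (forall x y, S x -> S y -> S (x * y)) &
      (forall (k : K) x, S x -> S (k *: x))].

Definition is_ideal (S J : set A) : Prop :=
  [/\ J `<=` S, J 0, (forall x y, J x -> J y -> J (x + y)),
      (forall x, J x -> J (- x)) &
      (forall s x, S s -> J x -> J (s * x) /\ J (x * s))].

(* M/J is a minimal (i.e. simple) ideal of S/J *)
Definition minimal_over (S J M : set A) : Prop :=
  [/\ is_ideal S M, J `<` M &
      forall N, is_ideal S N -> J `<=` N -> N `<=` M -> N = J \/ N = M].

(* socle_step S J = the ideal T of S containing J with T/J = Soc(S/J),  *)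
(* Soc(S/J) being the sum of the minimal ideals of S/J.                 *)
Definition socle_step (S J : set A) : set A :=
  [set x | exists (j : A) (s : seq A),
     [/\ J j,
         (forall m, m \in s -> exists M, minimal_over S J M /\ M m) &
         x = j + \sum_(m <- s) m]].

Definition is_wellorder (O : Type) (lt : O -> O -> Prop) : Prop :=
  [/\ well_founded lt, (forall a b c, lt a b -> lt b c -> lt a c) &
      (forall a b, lt a b \/ a = b \/ lt b a)].

Definition is_succ (O : Type) (lt : O -> O -> Prop) (a b : O) : Prop :=
  lt a b /\ ~ (exists c, lt a c /\ lt c b).

Definition is_socle_sequence (S : set A) (O : Type) (lt : O -> O -> Prop)
    (Ssq : O -> set A) : Prop :=
  forall a,
    [/\ (forall b, ~ lt b a) -> Ssq a = [set 0],
        (forall b, is_succ lt b a -> Ssq a = socle_step S (Ssq b)) &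
        ((exists b, lt b a) -> (forall b, ~ is_succ lt b a) ->
           Ssq a = \bigcup_(b in [set b | lt b a]) Ssq b)].

Definition finsupp (Lam : Type) (g : Lam -> K) : Prop :=
  finite_set [set l | g l != 0].

(* The layer Jb/Ja is isomorphic, as a K-algebra without unit, to K^(Lam) *)
(* for some nonempty Lam: there is a K-linear multiplicative map from Jb  *)
(* onto K^(Lam) whose kernel is Ja (Ja being contained in Jb).           *)
Definition layer_iso (Jb Ja : set A) : Prop :=
  exists (Lam : Type), inhabited Lam /\
  exists f : A -> Lam -> K,
    (forall x, Jb x -> finsupp (f x)) /\
    (forall x y, Jb x -> Jb y -> f (x + y) = (fun l => f x l + f y l)) /\
    (forall (k : K) x, Jb x -> f (k *: x) = (fun l => k * f x l)) /\
    (forall x y, Jb x -> Jb y -> f (x * y) = (fun l => f x l * f y l)) /\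
    (forall g : Lam -> K, finsupp g -> exists2 x, Jb x & f x = g) /\
    (forall x, Jb x -> (f x = (fun _ => 0) <-> Ja x)).

(* The class frak R_K: commutative von Neumann regular semiartinian      *)
(* K-algebras of Loewy length sigma+1 all of whose layers L_a (a<=sigma) *)
(* are isomorphic to K^(lambda_a), lambda_a > 0.                        *)
Definition in_frakR (S : set A) : Prop :=
  [/\ is_subalgebra S,
      (forall x y, S x -> S y -> x * y = y * x),
      (forall x, S x -> exists2 y, S y & x = x * y * x) &
      exists (O : Type) (lt : O -> O -> Prop) (Ssq : O -> set A) (sigma top : O),
        is_wellorder lt /\ is_socle_sequence S lt Ssq /\
        is_succ lt sigma top /\ (forall a, a = top \/ lt a top) /\
        Ssq top = S /\ Ssq sigma <> S /\
        (forall a b, is_succ lt a b -> layer_iso (Ssq b) (Ssq a))].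

End Class.

(* The socle sequence of an algebra is the transfinite tower of socle steps
   starting from 0, so membership in frak R_K says: the algebra is commutative
   and regular, its tower reaches it at a successor stage, and every layer is
   some K^(lambda) with lambda > 0.  Commutativity and regularity of
   R(kappa, K, R) hold coordinatewise.  Because kappa is infinite, every x in
   R(kappa, K, R) has a well defined scalar part k, with x - k 1 finitely
   supported.  By transfinite induction, each member of the tower of
   R(kappa, K, R) is a product ideal: the x with x_i in Y_i for all i, and with
   zero scalar part unless a flag c holds, where each Y_i is in the tower of
   R_i.  The socle step acts coordinatewise on the Y_i, and it turns the flag
   on once almost all Y_i contain 1: allowing scalar parts then gives a
   minimal ideal over the old product ideal.  Hence each layer is the direct
   sum of the layers of the R_i, plus at most one copy of K for the scalar
   part, so it is again some K^(lambda).  The tower stops only when every Y_i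
   is all of R_i, that is, at R(kappa, K, R) itself. *)

From HB Require Import structures.
From mathcomp Require Import all_boot all_algebra.
From mathcomp Require Import boolp classical_sets cardinality.
Import GRing.Theory.
Local Open Scope ring_scope.
Local Open Scope classical_set_scope.

Set Implicit Arguments.
Unset Strict Implicit.
Unset Printing Implicit Defensive.

(** * Towers of iterates *)

Lemma sub_neq_proper T (A B : set T) : A `<=` B -> A <> B -> A `<` B.
Proof. by move=> AB neq; split => // BA; apply: neq; apply/seteqP. Qed.

Lemma proper_sub_neq T (A B : set T) : A `<` B -> A <> B.
Proof. by move=> [_ nBA] eAB; apply: nBA; rewrite eAB. Qed.

Lemma chain_finite_bound T (X : eqType) (F : set (set T)) (J0 : set T)
    (s : seq X) (p : X -> T) :
  (forall J J', F J -> F J' -> J `<=` J' \/ J' `<=` J) -> F J0 ->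
  (forall i, i \in s -> exists2 J, F J & J (p i)) ->
  exists J, [/\ F J, J0 `<=` J & forall i, i \in s -> J (p i)].
Proof.
move=> chainF FJ0; elim: s => [|t s IH] ts; first by exists J0; split.
have [J [FJ J0J Js]] := IH (fun u us => ts u (mem_behead (s := t :: s) us)).
have [Jt FJt Jtt] := ts t (mem_head t s).
case: (chainF _ _ FJ FJt) => [JJt|JtJ].
- exists Jt; split => [//||u]; first exact: subset_trans J0J JJt.
  by rewrite in_cons => /orP[/eqP->//|/Js/JJt].
- by exists J; split => // u; rewrite in_cons => /orP[/eqP->|/Js//]; apply: JtJ.
Qed.

Section Tower.
Variables (T : Type) (base : set T) (step : set T -> set T).
Hypothesis step_infl : forall J, J `<=` step J.

Inductive tower : set T -> Prop :=
| tower_base : tower base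
| tower_step J : tower J -> tower (step J)
| tower_bigcup (F : set (set T)) : F !=set0 -> F `<=` tower ->
    tower (\bigcup_(J in F) J).

Lemma base_sub_tower J : tower J -> base `<=` J.
Proof.
elim=> [//|J' _ IH|F [J0 FJ0] _ IH]; first exact: subset_trans IH (@step_infl J').
by move=> x /(IH _ FJ0) J0x; exists J0.
Qed.

(* Zorn-style proof that the tower is a chain: every member [c] is extreme, i.e.
   [step d <= c] for all members [d < c], and an extreme member is comparable
   with every member [d], indeed [d <= c] or [step c <= d]. *)
Let extreme c := forall d, tower d -> d `<` c -> step d `<=` c.

Let extreme_cmp c d : tower c -> extreme c -> tower d ->
  d `<=` c \/ step c `<=` d.
Proof.
move=> tc ec; elim=> [|J tJ IH|F F0 tF IH].
- by left; apply: base_sub_tower.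
- case: IH => [Jc|cJ]; last by right; apply: subset_trans cJ (@step_infl J).
  have [->|neq] := pselect (J = c); first by right.
  by left; apply: ec => //; apply: sub_neq_proper.
- have [allc|] := pselect (forall J, F J -> J `<=` c).
    by left => x [J FJ Jx]; apply: allc FJ _ Jx.
  move=> /existsNP[J /not_implyP[FJ nJc]].
  by case: (IH J FJ) => // cJ; right => x /cJ Jx; exists J.
Qed.

Let tower_extreme c : tower c -> extreme c.
Proof.
elim=> [|c0 tc IH|F F0 tF IH] d td [dc ncd].
- by exfalso; apply: ncd; apply: base_sub_tower.
- case: (extreme_cmp tc IH td) => [dc0|]; last by move=> /ncd.
  have [->//|neq] := pselect (d = c0).
  by apply: subset_trans (IH d td _) (@step_infl c0); apply: sub_neq_proper.
- have [allstep|] := pselect (forall J, F J -> step J `<=` d).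
    by exfalso; apply: ncd => x [J FJ Jx]; apply: allstep FJ _ (step_infl Jx).
  move=> /existsNP[J /not_implyP[FJ nJd]].
  case: (extreme_cmp (tF J FJ) (IH J FJ) td) => // dJ.
  have [edJ|neq] := pselect (d = J); last first.
    by move=> x /(IH J FJ d td (sub_neq_proper dJ neq)) Jx; exists J.
  subst d; have [allJ|] := pselect (forall J', F J' -> J' `<=` J).
    by exfalso; apply: ncd => x [J' FJ' J'x]; apply: allJ FJ' _ J'x.
  move=> /existsNP[J' /not_implyP[FJ' nJ'J]].
  case: (extreme_cmp (tF J FJ) (IH J FJ) (tF J' FJ')) => // sJ.
  by move=> x /sJ J'x; exists J'.
Qed.

Lemma tower_total c d : tower c -> tower d -> d `<=` c \/ c `<=` d.
Proof.
move=> tc td; case: (extreme_cmp tc (tower_extreme tc) td); first by left.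
by right; apply: subset_trans (@step_infl c) _.
Qed.

Lemma tower_step_sub c d : tower c -> tower d -> c `<` d -> step c `<=` d.
Proof.
by move=> tc td [cd ncd]; case: (extreme_cmp tc (tower_extreme tc) td).
Qed.

Lemma tower_fix_max c : tower c -> step c = c -> forall d, tower d -> d `<=` c.
Proof.
move=> tc sc d; elim=> [|J tJ IH|F F0 tF IH].
- exact: base_sub_tower.
- case: (extreme_cmp tJ (tower_extreme tJ) tc) => // cJ.
  have -> : J = c by apply/seteqP; split.
  by rewrite sc.
- by move=> x [J FJ Jx]; apply: IH FJ _ Jx.
Qed.

Lemma tower_fixpoint : exists2 M, tower M & step M = M.
Proof.
set M := \bigcup_(J in tower) J.
have tM : tower M by apply: tower_bigcup => //; exists base; apply: tower_base.
have sM : step M = M.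
  apply/seteqP; split; last exact: step_infl.
  by move=> x sx; exists (step M) => //; apply: tower_step.
by exists M.
Qed.

Lemma tower_cases d : tower d ->
  [\/ d = base, exists2 b, tower b & b `<` d /\ d = step b |
      d = \bigcup_(b in [set b | tower b /\ b `<` d]) b].
Proof.
elim=> [|J tJ IH|F F0 tF IH]; first by apply: Or31.
- have [eq|neq] := pselect (step J = J); first by rewrite eq.
  apply: Or32; exists J => //; split => //.
  by apply: sub_neq_proper => // eJ; apply: neq; rewrite -eJ.
- set U := \bigcup_(J in F) J.
  have [[J FJ <-]|nU] := pselect (exists2 J, F J & J = U); first exact: IH.
  apply: Or33; apply/seteqP; split => [x [J FJ Jx]|x [b [_ [bU _]] /bU //]].
  exists J => //; split; first exact: tF.
  apply: sub_neq_proper => [y Jy|eJU]; first by exists J.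
  by apply: nU; exists J.
Qed.

Lemma tower_min (D : set (set T)) : D !=set0 -> D `<=` tower ->
  exists2 m, D m & forall J, D J -> m `<=` J.
Proof.
move=> [J0 DJ0] tD.
set L := [set d | tower d /\ forall J, D J -> d `<=` J].
set U := \bigcup_(d in L) d.
have tU : tower U.
  apply: tower_bigcup => [|d []//]; exists base; split; first exact: tower_base.
  by move=> J /tD /base_sub_tower.
have UD J : D J -> U `<=` J by move=> DJ x [d [_ dJ] dx]; apply: dJ DJ _ dx.
have [DU|nDU] := pselect (D U); first by exists U.
have LsU : L (step U).
  split => [|J DJ]; first exact: tower_step.
  apply: tower_step_sub => //; first exact: tD.
  by apply: sub_neq_proper; [apply: UD|move=> eUJ; apply: nDU; rewrite eUJ].
have fixU : step U = U.
  by apply/seteqP; split => [x sx|]; [exists (step U)|apply: step_infl].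
have eUJ0 : U = J0.
  by apply/seteqP; split; [apply: UD|apply: tower_fix_max fixU _ (tD _ DJ0)].
by exfalso; apply: nDU; rewrite eUJ0.
Qed.

Definition tower_elt := {J : set T | tower J}.
Definition tower_lt (a b : tower_elt) := sval a `<` sval b.

Lemma tower_lt_wellorder : is_wellorder tower_lt.
Proof.
split.
- move=> a; apply: contrapT => nAa.
  set D := [set J | exists b : tower_elt, sval b = J /\ ~ Acc tower_lt b].
  have [m [b [<- nAb]] bmin] : exists2 m, D m & forall J, D J -> m `<=` J.
    by apply: tower_min => [|J [b [<- _]]]; [exists (sval a), a|exact: svalP].
  apply: nAb; constructor => y [yb nby]; apply: contrapT => nAy.
  by apply: nby; apply: bmin; exists y.
- move=> a b c [ab nba] [bc ncb]; split; first exact: subset_trans ab bc.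
  by move=> ca; apply: nba; apply: subset_trans bc ca.
- move=> a b; have [eab|neab] := pselect (sval a = sval b).
    by right; left; case: a b eab => [a ta] [b tb] /= eab; apply: eq_exist.
  case: (tower_total (svalP a) (svalP b)) => sub.
    by right; right; apply: sub_neq_proper => // eba; apply: neab.
  by left; apply: sub_neq_proper.
Qed.

Lemma tower_lt_succ a b : is_succ tower_lt a b -> sval b = step (sval a).
Proof.
move=> [ab nb]; have sab := tower_step_sub (svalP a) (svalP b) ab.
apply/seteqP; split => //; have [//|nsub] := pselect (sval b `<=` step (sval a)); exfalso.
have tS : tower (step (sval a)) := tower_step (svalP a).
have neS : step (sval a) <> sval a.
  by move=> eS; case: ab => _; apply; exact: (tower_fix_max (svalP a) eS (svalP b)).
apply: nb; exists (exist _ _ tS); split.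
  by apply: sub_neq_proper => // eS; apply: neS.
by apply: sub_neq_proper => // eS; apply: nsub; rewrite -eS.
Qed.

Lemma tower_sequence a :
  [/\ (forall b, ~ tower_lt b a) -> sval a = base,
      (forall b, is_succ tower_lt b a -> sval a = step (sval b)) &
      ((exists b, tower_lt b a) -> (forall b, ~ is_succ tower_lt b a) ->
         sval a = \bigcup_(b in [set b | tower_lt b a]) sval b)].
Proof.
split => [nlt|b /tower_lt_succ//|[b0 b0a] nsucc].
- case: (tower_cases (svalP a)) => [//|[b tb [ba _]]|ea].
    by case: (nlt (exist _ b tb)).
  have : sval a `<=` base by rewrite ea => x [b [tb ba] _]; case: (nlt (exist _ b tb)).
  by move=> abase; apply/seteqP; split => //; exact: (base_sub_tower (svalP a)).
- case: (tower_cases (svalP a)) => [ebase|[b tb [ba eb]]|ea].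
  + by exfalso; case: b0a => _; apply; rewrite ebase; exact: (base_sub_tower (svalP b0)).
  + case: (nsucc (exist _ b tb)); split => // -[c [bc ca]].
    by case: ca => _; apply; rewrite eb; exact: (tower_step_sub tb (svalP c) bc).
  + rewrite {1}ea; apply/seteqP; split => [x [J [tJ Ja] Jx]|x [c ca cx]].
      by exists (exist _ J tJ).
    by exists (sval c) => //; split => //; apply: svalP.
Qed.

End Tower.

(** * Socle steps and the class frak R_K *)

Section Ideals.
Variables (K : fieldType) (A : algType K) (S : set A).

Section IdealTheory.
Variable J : set A.
Hypothesis idealJ : is_ideal S J.

Lemma is_ideal_sub : J `<=` S. Proof. by case: idealJ. Qed.
Lemma is_ideal0 : J 0. Proof. by case: idealJ. Qed.
Lemma is_idealD x y : J x -> J y -> J (x + y). Proof. by case: idealJ => _ _ + _ _; apply. Qed.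
Lemma is_idealN x : J x -> J (- x). Proof. by case: idealJ => _ _ _ + _; apply. Qed.
Lemma is_idealB x y : J x -> J y -> J (x - y).
Proof. by move=> Jx Jy; apply: is_idealD => //; apply: is_idealN. Qed.
Lemma is_idealMl s x : S s -> J x -> J (s * x).
Proof. by case: idealJ => _ _ _ _ h Ss Jx; case: (h s x Ss Jx). Qed.
Lemma is_idealMr s x : S s -> J x -> J (x * s).
Proof. by case: idealJ => _ _ _ _ h Ss Jx; case: (h s x Ss Jx). Qed.
Lemma is_idealZ c x : S (c *: 1) -> J x -> J (c *: x).
Proof. by move=> S1 Jx; rewrite -[x]mul1r scalerAl; apply: is_idealMl. Qed.

End IdealTheory.

Lemma is_idealI J1 J2 : is_ideal S J1 -> is_ideal S J2 -> is_ideal S (J1 `&` J2).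
Proof.
move=> i1 i2; split.
- by move=> x [/(is_ideal_sub i1)].
- by split; apply: is_ideal0.
- by move=> x y [? ?] [? ?]; split; apply: is_idealD.
- by move=> x [? ?]; split; apply: is_idealN.
- by move=> s x Ss [? ?]; split; split; do ?[exact: is_idealMl|exact: is_idealMr].
Qed.

Lemma is_ideal_bigcup (T : Type) (D : set T) (G : T -> set A) : D !=set0 ->
  (forall i, D i -> is_ideal S (G i)) ->
  (forall i j, D i -> D j -> G i `<=` G j \/ G j `<=` G i) ->
  is_ideal S (\bigcup_(i in D) G i).
Proof.
move=> [i0 Di0] iG chainG; split.
- by move=> x [i Di Gx]; exact: (is_ideal_sub (iG i Di) Gx).
- by exists i0 => //; exact: (is_ideal0 (iG i0 Di0)).
- move=> x y [i Di Gix] [j Dj Gjy].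
  case: (chainG i j Di Dj) => [ij|ji].
  + by exists j => //; exact: (is_idealD (iG j Dj) (ij _ Gix) Gjy).
  + by exists i => //; exact: (is_idealD (iG i Di) Gix (ji _ Gjy)).
- by move=> x [i Di Gx]; exists i => //; exact: (is_idealN (iG i Di) Gx).
- move=> s x Ss [i Di Gx].
  by split; exists i => //;
    [exact: (is_idealMl (iG i Di) Ss Gx)|exact: (is_idealMr (iG i Di) Ss Gx)].
Qed.

End Ideals.

Section SocleStep.
Variables (K : fieldType) (A : algType K) (S : set A).

Lemma socle_step_infl J : J `<=` socle_step S J.
Proof. by move=> x Jx; exists x, [::]; split => //; rewrite big_nil addr0. Qed.

Lemma socle_step_ind J (Q : set A) :
  (forall x y, Q x -> Q y -> Q (x + y)) -> J `<=` Q ->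
  (forall M, minimal_over S J M -> M `<=` Q) -> socle_step S J `<=` Q.
Proof.
move=> QD JQ MQ x [j [s [Jj sM ->]]].
elim: s sM => [|m s IH] sM; first by rewrite big_nil addr0; apply: JQ.
rewrite big_cons addrCA; apply: QD; last by apply: IH => m' m's; apply/sM/mem_behead.
by have [M [minM Mm]] := sM m (mem_head m s); apply: MQ minM _ Mm.
Qed.

Lemma minimal_sub_socle_step J M : J 0 -> minimal_over S J M ->
  M `<=` socle_step S J.
Proof.
move=> J0 minM m Mm; exists 0, [:: m]; split => //; last by rewrite big_seq1 add0r.
by move=> m'; rewrite inE => /eqP ->; exists M.
Qed.

Lemma socle_stepD J x y : is_ideal S J ->
  socle_step S J x -> socle_step S J y -> socle_step S J (x + y).
Proof.
move=> iJ [j1 [s1 [J1 s1M ->]]] [j2 [s2 [J2 s2M ->]]].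
exists (j1 + j2), (s1 ++ s2); split; first exact: (is_idealD iJ J1 J2).
  by move=> m; rewrite mem_cat => /orP[/s1M|/s2M].
by rewrite big_cat /= addrACA.
Qed.

Hypothesis subalgS : is_subalgebra S.

Lemma subalgebra0 : S 0.
Proof. by case: subalgS => S1 SD SN _ _; rewrite -(addrN 1); apply/SD/SN. Qed.

Lemma is_ideal_socle_step J : is_ideal S J -> is_ideal S (socle_step S J).
Proof.
move=> iJ; have stepD := socle_stepD iJ.
have stepM M : minimal_over S J M -> M `<=` socle_step S J.
  exact: minimal_sub_socle_step (is_ideal0 iJ).
split.
- apply: socle_step_ind; [by case: subalgS|exact: is_ideal_sub|].
  by move=> M [iM _ _]; apply: is_ideal_sub iM.
- exact/socle_step_infl/(is_ideal0 iJ).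
- exact: stepD.
- move=> x; apply: (socle_step_ind (Q := fun x => socle_step S J (- x))).
  + by move=> a b ha hb; rewrite opprD; apply: stepD.
  + by move=> a Ja; exact: (socle_step_infl (is_idealN iJ Ja)).
  + by move=> M minM a Ma; have [iM _ _] := minM; exact: (stepM _ minM _ (is_idealN iM Ma)).
- move=> s x Ss; apply: (socle_step_ind (Q := fun x =>
     socle_step S J (s * x) /\ socle_step S J (x * s))).
  + by move=> a b [? ?] [? ?]; rewrite mulrDr mulrDl; split; apply: stepD.
  + move=> a Ja; split; apply: socle_step_infl.
      exact: (is_idealMl iJ Ss Ja).
    exact: (is_idealMr iJ Ss Ja).
  + move=> M minM a Ma; have [iM _ _] := minM.
    by split; apply: (stepM _ minM); [exact: (is_idealMl iM Ss Ma)|exact: (is_idealMr iM Ss Ma)].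
Qed.

Lemma socle_step_id : socle_step S S = S.
Proof.
apply/seteqP; split; last exact: socle_step_infl.
apply: socle_step_ind => //; first by case: subalgS.
by move=> M [iM _ _]; apply: is_ideal_sub iM.
Qed.

End SocleStep.

Notation socle_tower S := (tower [set 0] (socle_step S)).

Section SocleTower.
Variables (K : fieldType) (A : algType K) (S : set A).
Hypothesis subalgS : is_subalgebra S.
Let infl := @socle_step_infl K A S.

Lemma is_ideal_socle_tower J : socle_tower S J -> is_ideal S J.
Proof.
have S0 := subalgebra0 subalgS.
elim=> [|J' _ iJ'|F F0 tF iF].
- by split => [x ->|//|x y -> ->|x ->|s x Ss ->]; rewrite ?addr0 ?oppr0 ?mulr0 ?mul0r.
- exact: is_ideal_socle_step.
- apply: is_ideal_bigcup => // J1 J2 /tF tJ1 /tF tJ2.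
  by case: (tower_total infl tJ1 tJ2); [right|left].
Qed.

Lemma socle_tower_sub J : socle_tower S J -> J `<=` S.
Proof. by move/is_ideal_socle_tower/is_ideal_sub. Qed.

Lemma socle_tower_last : socle_tower S S ->
  exists2 b, socle_tower S b & b `<` S /\ S = socle_step S b.
Proof.
have [S1 _ _ _ _] := subalgS.
move=> tS; case: (tower_cases infl tS) => [eS0|//|eS].
  by move: S1; rewrite eS0 => /eqP; rewrite oner_eq0.
move: (S1); rewrite eS => -[b [tb [_ nSb]] b1]; exfalso; apply: nSb => x Sx.
by rewrite -[x]mulr1; exact: (is_idealMl (is_ideal_socle_tower tb) Sx b1).
Qed.

Lemma socle_tower_in_frakR :
  (forall x y, S x -> S y -> x * y = y * x) ->
  (forall x, S x -> exists2 y, S y & x = x * y * x) ->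
  socle_tower S S ->
  (forall J, socle_tower S J -> J `<` S -> layer_iso (socle_step S J) J) ->
  in_frakR S.
Proof.
move=> commS regS tS layerS; split => //.
have [b tb [bS eS]] := socle_tower_last tS.
pose top : tower_elt [set 0] (socle_step S) := exist _ S tS.
exists (tower_elt [set 0] (socle_step S)), (@tower_lt _ _ _), sval,
  (exist _ b tb), top.
split; first exact: tower_lt_wellorder.
split; first exact: tower_sequence.
split; first split => // -[c [bc cS]].
  case: cS => _; apply.
  by move: (tower_step_sub infl tb (svalP c) bc); rewrite -eS.
split.
  move=> a; have [eaS|neaS] := pselect (sval a = S).
    by left; case: a eaS => a ta /= eaS; apply: eq_exist.
  by right; apply: sub_neq_proper => //; exact: (socle_tower_sub (svalP a)).
split => //; split; first exact: (proper_sub_neq bS).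
move=> a c sac; rewrite (tower_lt_succ infl sac); apply: layerS; first exact: svalP.
  have [[ac nca] _] := sac; apply: sub_neq_proper => [|eaS].
    exact: (socle_tower_sub (svalP a)).
  by apply: nca; rewrite eaS; exact: (socle_tower_sub (svalP c)).
Qed.

Section SocleSequence.
Variables (O : Type) (lt : O -> O -> Prop) (Ssq : O -> set A) (top : O).
Hypotheses (wo_lt : is_wellorder lt) (Ssq_socle : is_socle_sequence S lt Ssq).
Hypotheses (top_max : forall a, a = top \/ lt a top) (Ssq_top : Ssq top = S).

Let lt_wf : well_founded lt. Proof. by case: wo_lt. Qed.
Let lt_total a b : lt a b \/ a = b \/ lt b a. Proof. by case: wo_lt. Qed.

Lemma wellorder_min (D : set O) : D !=set0 ->
  exists m, D m /\ forall y, D y -> ~ lt y m.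
Proof.
move=> [a Da]; elim: (lt_wf a) Da => {}a _ IH Da.
have [[y [Dy ya]]|nlt] := pselect (exists y, D y /\ lt y a); first exact: IH ya Dy.
by exists a; split => // y Dy ya; apply: nlt; exists y.
Qed.

Lemma socle_sequence_mono a b : lt a b -> Ssq a `<=` Ssq b.
Proof.
elim: (lt_wf b) a => {}b _ IH a ab; have [_ Ssucc Slim] := Ssq_socle b.
have [[c cb]|nsucc] := pselect (exists c, is_succ lt c b).
  rewrite (Ssucc c cb); have [cb1 cb2] := cb.
  case: (lt_total a c) => [ac|[->|ca]]; last by case: cb2; exists a.
  - by move=> x /(IH c cb1 a ac); apply: socle_step_infl.
  - exact: socle_step_infl.
rewrite Slim => [x Sx|//|c cb]; [by exists a|by exists a|by apply: nsucc; exists c].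
Qed.

Lemma socle_sequence_succ a : a <> top -> exists s, is_succ lt a s.
Proof.
move=> atop; have atop' : lt a top by case: (top_max a).
have [s [las smin]] := wellorder_min (ex_intro [set c | lt a c] top atop').
by exists s; split => // -[c [ac cs]]; apply: smin cs.
Qed.

Lemma socle_sequence_bigcup (F : set (set A)) : F !=set0 -> F `<=` range Ssq ->
  range Ssq (\bigcup_(X in F) X).
Proof.
move=> [X0 FX0] FSsq; set D := [set a | F (Ssq a)].
set UB := [set b | forall a, D a -> lt a b \/ a = b].
have [b [UBb bmin]] : exists b, UB b /\ forall y, UB y -> ~ lt y b.
  by apply: wellorder_min; exists top => a _; case: (top_max a); [right|left].
have [Db|nDb] := pselect (D b).
  exists b => //; apply/seteqP; split => [x Sx|x [X FX Xx]]; first by exists (Ssq b).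
  have [a _ eX] := FSsq X FX; subst X.
  by case: (UBb a FX) => [ab|<-//]; exact: (socle_sequence_mono ab Xx).
have ltD a : D a -> lt a b by move=> Da; case: (UBb a Da) => // eab; subst a.
have [a0 _ eX0] := FSsq X0 FX0; subst X0.
have nsucc c : ~ is_succ lt c b.
  move=> [cb cb2]; apply: (bmin c) cb => a Da.
  case: (lt_total a c) => [|[|ca]]; [by left|by right|].
  by case: cb2; exists a; split => //; apply: ltD.
exists b => //; have [_ _ Slim] := Ssq_socle b.
rewrite Slim; [|by exists a0; apply: ltD|by []].
apply/seteqP; split => [x [c cb Scx]|x [X FX Xx]]; last first.
  by have [a _ eX] := FSsq X FX; subst X; exists a => //; apply: ltD.
have [UBc|] := pselect (UB c); first by case: (bmin c UBc cb).
move=> /existsNP[a /not_implyP[Da nac]].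
case: (lt_total a c) => [ac|[eac|ca]]; [by case: nac; left|by case: nac; right|].
by exists (Ssq a) => //; exact: (socle_sequence_mono ca Scx).
Qed.

Lemma socle_tower_range J : socle_tower S J -> range Ssq J.
Proof.
elim=> [|J' _ [a _ <-]|F F0 _ IH].
- have [m [_ mmin]] := wellorder_min (ex_intro setT top I).
  by exists m => //; have [-> //] := Ssq_socle m; move=> b bm; apply: mmin bm.
- have [eatop|natop] := pselect (a = top).
    by exists top => //; rewrite eatop Ssq_top socle_step_id.
  have [s sa] := socle_sequence_succ natop; exists s => //.
  by have [_ Ssucc _] := Ssq_socle s; rewrite (Ssucc a sa).
- exact: socle_sequence_bigcup.
Qed.

End SocleSequence.

End SocleTower.

Lemma in_frakR_socle_tower_layer (K : fieldType) (A : algType K) (S J : set A) :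
  in_frakR S -> socle_tower S J -> J <> S -> layer_iso (socle_step S J) J.
Proof.
case=> subalgS _ _ [O [lt [Ssq [sigma [top [wo [Ssocle [_ [top_max [Stop [_ layers]]]]]]]]]]].
move=> tJ nJS; have [a _ eJ] := socle_tower_range subalgS wo Ssocle top_max Stop tJ; subst J.
have natop : a <> top by move=> eatop; apply: nJS; rewrite eatop Stop.
have [s sa] := socle_sequence_succ wo top_max natop.
by have [_ Ssucc _] := Ssocle s; rewrite -(Ssucc a sa); apply: layers.
Qed.

(** * Layer maps *)

Section LayerMap.
Variables (K : fieldType) (A : algType K).

Record layer_map (Jb Ja : set A) (Lam : Type) (f : A -> Lam -> K) : Prop := LayerMap {
  layer_finsupp : forall x, Jb x -> finsupp (f x);
  layer_add : forall x y, Jb x -> Jb y -> f (x + y) = (fun l => f x l + f y l);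
  layer_scale : forall k x, Jb x -> f (k *: x) = (fun l => k * f x l);
  layer_mul : forall x y, Jb x -> Jb y -> f (x * y) = (fun l => f x l * f y l);
  layer_surj : forall g, finsupp g -> exists2 x, Jb x & f x = g;
  layer_ker : forall x, Jb x -> (f x = (fun _ => 0) <-> Ja x) }.

Lemma layer_isoP (Jb Ja : set A) : layer_iso Jb Ja <->
  exists Lam, inhabited Lam /\ exists f : A -> Lam -> K, layer_map Jb Ja f.
Proof.
split=> [[Lam [inh [f [? [? [? [? [? ?]]]]]]]]|[Lam [inh [f []]]]].
  by exists Lam; split => //; exists f.
by exists Lam; split => //; exists f.
Qed.

Lemma layer_iso_proper (Jb Ja : set A) : layer_iso Jb Ja -> exists x, Jb x /\ ~ Ja x.
Proof.
move=> /layer_isoP[Lam [[l0] [f fJ]]].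
pose g l : K := `[< l = l0 >]%:R.
have fg : finsupp g.
  apply: (@sub_finite_set _ _ [set l0]); last exact: finite_set1.
  by move=> l; rewrite /g /=; case: asboolP => // _; rewrite eqxx.
have [x Jx fx] := layer_surj fJ fg; exists x; split => // Jax.
have := congr1 (fun G => G l0) ((layer_ker fJ Jx).2 Jax).
by rewrite fx /g /=; case: asboolP => // _ /eqP; rewrite oner_eq0.
Qed.

Lemma layer_map_trivial (Jb Ja : set A) : Jb 0 -> Jb `<=` Ja ->
  layer_map Jb Ja (fun _ => @of_void K).
Proof.
move=> Jb0 JbJa; split => //.
- by move=> x _; apply: (@sub_finite_set _ _ set0) => // -[].
- by move=> x y _ _; apply: funext => -[].
- by move=> k x _; apply: funext => -[].
- by move=> x y _ _; apply: funext => -[].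
- by move=> g _; exists 0 => //; apply: funext => -[].
- by move=> x Jx; split => [_|_]; [apply: JbJa|apply: funext => -[]].
Qed.

Lemma layer_map_preimage (Jb Ja : set A) Lam (f : A -> Lam -> K) : layer_map Jb Ja f ->
  Jb 0 -> Ja 0 -> forall g, finsupp g ->
  exists x, [/\ Jb x, f x = g & g = (fun _ => 0) -> x = 0].
Proof.
move=> fJ Jb0 Ja0 g fg; have [g0|ng0] := pselect (g = fun _ => 0).
  by exists 0; split => //; rewrite g0; apply/(layer_ker fJ Jb0).
by have [x Jx fx] := layer_surj fJ fg; exists x.
Qed.

End LayerMap.

Lemma socle_step_layer_map (K : fieldType) (A : algType K) (J : set A) : J 0 ->
  (J <> setT -> layer_iso (socle_step setT J) J) ->
  exists Lam (f : A -> Lam -> K), layer_map (socle_step setT J) J f.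
Proof.
move=> J0 layerJ; have [eJ|/layerJ/layer_isoP[Lam [_ [f fJ]]]] := pselect (J = setT).
  exists void, (fun _ => @of_void K); rewrite eJ socle_step_id //.
  by apply: layer_map_trivial.
by exists Lam, f.
Qed.

Section FinSupp.
Variable K : fieldType.

Lemma finite_set_Prop (Q : Prop) (A : set Q) : finite_set A.
Proof.
have [[e0 Ae0]|A0] := pselect (A !=set0); last first.
  by rewrite (_ : A = set0) //; apply/seteqP; split => // e Ae; apply: A0; exists e.
apply: (@sub_finite_set _ _ [set e0]); last exact: finite_set1.
by move=> e _; apply: Prop_irrelevance.
Qed.

Lemma finsupp_sum (T1 T2 : Type) (g : T1 + T2 -> K) :
  finsupp (g \o inl) -> finsupp (g \o inr) -> finsupp g.
Proof.
move=> f1 f2; apply: (@sub_finite_set _ _ (inl @` [set a | g (inl a) != 0]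
  `|` inr @` [set b | g (inr b) != 0])); last by rewrite finite_setU; split; apply: finite_image.
by case=> [a|b] nz; [left; exists a|right; exists b].
Qed.

Lemma finsupp_inl (T1 T2 : Type) (g : T1 + T2 -> K) : finsupp g -> finsupp (g \o inl).
Proof. by apply: (finite_preimage (f := inl)) => a b _ _ [->]. Qed.

Section Sigma.
Variables (J : eqType) (Lam : J -> Type).

Lemma finsupp_sigma (g : {j & Lam j} -> K) :
  finite_set [set j | exists l : Lam j, g (Tagged Lam l) != 0] ->
  (forall j, finsupp (fun l : Lam j => g (Tagged Lam l))) -> finsupp g.
Proof.
move=> ftags fslices; apply: (@sub_finite_set _ _ (\bigcup_(j in [set j |
    exists l : Lam j, g (Tagged Lam l) != 0])
    (fun l : Lam j => Tagged Lam l) @` [set l | g (Tagged Lam l) != 0])).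
  by case=> j l nz; exists j; [exists l|exists l].
by apply: bigcup_finite => // j _; apply: finite_image; apply: fslices.
Qed.

Lemma finsupp_tagged (g : {j & Lam j} -> K) j :
  finsupp g -> finsupp (fun l : Lam j => g (Tagged Lam l)).
Proof.
apply: (finite_preimage (f := fun l : Lam j => Tagged Lam l)) => l1 l2 _ _ e12.
by rewrite -[l2](tagged_asE (u := Tagged Lam l1)) -e12 tagged_asE.
Qed.

Lemma finite_tags (g : {j & Lam j} -> K) : finsupp g ->
  finite_set [set j | exists l : Lam j, g (Tagged Lam l) != 0].
Proof.
move=> fg; apply: (@sub_finite_set _ _ (tag @` [set u | g u != 0])).
  by move=> j [l nz]; exists (Tagged Lam l).
exact: finite_image.
Qed.

End Sigma.
End FinSupp.

(** * The algebra R(kappa, K, R) and its product ideals *)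

Definition coord_socle_step (K : fieldType) (I : Type) (R : I -> algType K)
  (X : forall i, set (R i)) (i : I) : set (R i) := socle_step [set: R i] (X i).
Arguments coord_socle_step [K I R] X i _.

Section ProductAlgebra.
Variables (K : fieldType) (I : pointedType) (R : I -> algType K).
Local Notation P := (dprod R).
Local Notation Rk := (Rkappa R).

Lemma dprodP (x y : P) : (forall i, x i = y i) -> x = y.
Proof. exact: functional_extensionality_dep. Qed.

Lemma dprod0E i : (0 : P) i = 0. Proof. by []. Qed.
Lemma dprod1E i : (1 : P) i = 1. Proof. by []. Qed.
Lemma dprodDE (x y : P) i : (x + y) i = x i + y i. Proof. by []. Qed.
Lemma dprodNE (x : P) i : (- x) i = - x i. Proof. by []. Qed.
Lemma dprodME (x y : P) i : (x * y) i = x i * y i. Proof. by []. Qed.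
Lemma dprodZE k (x : P) i : (k *: x) i = k *: x i. Proof. by []. Qed.
Definition dprodE := (dprod0E, dprod1E, dprodDE, dprodNE, dprodME, dprodZE).

Definition supp (x : P) := [set i | x i != 0].
Definition fin_supp (x : P) := finite_set (supp x).

Lemma fin_supp_sub x y : supp x `<=` supp y -> fin_supp y -> fin_supp x.
Proof. exact: sub_finite_set. Qed.

Lemma fin_supp0 : fin_supp 0.
Proof. by apply: (@sub_finite_set _ _ set0) => // i; rewrite /supp /= ?dprodE eqxx. Qed.

Lemma fin_suppD x y : fin_supp x -> fin_supp y -> fin_supp (x + y).
Proof.
move=> fx fy; apply: (@sub_finite_set _ _ (supp x `|` supp y)); last first.
  by rewrite finite_setU.
move=> i; rewrite /supp /= ?dprodE; case: (eqVneq (x i) 0) => [->|]; last by left.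
by rewrite add0r; right.
Qed.

Lemma fin_suppN x : fin_supp x -> fin_supp (- x).
Proof. by apply: fin_supp_sub => i; rewrite /supp /= ?dprodE oppr_eq0. Qed.

Lemma fin_suppMl x y : fin_supp x -> fin_supp (x * y).
Proof.
by apply: fin_supp_sub => i; rewrite /supp /= dprodE; apply: contra_neq => ->; rewrite mul0r.
Qed.

Lemma fin_suppZ c x : fin_supp x -> fin_supp (c *: x).
Proof.
by apply: fin_supp_sub => i; rewrite /supp /= dprodE; apply: contra_neq => ->; rewrite scaler0.
Qed.

Lemma notin_suppB x y i : ~ supp (x - y) i -> x i = y i.
Proof. by rewrite /supp /= ?dprodE => /negP; rewrite negbK subr_eq0 => /eqP. Qed.

Definition has_scalar (x : P) (k : K) := fin_supp (x - k *: 1).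

Lemma has_scalarC k : has_scalar (k *: 1) k.
Proof. by rewrite /has_scalar subrr; apply: fin_supp0. Qed.

Lemma has_scalar_fin_supp x : fin_supp x -> has_scalar x 0.
Proof. by rewrite /has_scalar scale0r subr0. Qed.

Lemma has_scalarD x y k l : has_scalar x k -> has_scalar y l ->
  has_scalar (x + y) (k + l).
Proof. by rewrite /has_scalar scalerDl opprD addrACA; apply: fin_suppD. Qed.

Lemma has_scalarN x k : has_scalar x k -> has_scalar (- x) (- k).
Proof. by rewrite /has_scalar scaleNr -opprD; apply: fin_suppN. Qed.

Lemma has_scalarZ c x k : has_scalar x k -> has_scalar (c *: x) (c * k).
Proof. by rewrite /has_scalar -scalerA -scalerBr; apply: fin_suppZ. Qed.

Lemma has_scalarM x y k l : has_scalar x k -> has_scalar y l ->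
  has_scalar (x * y) (k * l).
Proof.
move=> fx fy; rewrite /has_scalar.
have -> : x * y - (k * l) *: 1 = (x - k *: 1) * y + k *: (y - l *: 1).
  by rewrite mulrBl -scalerAl mul1r scalerBr scalerA addrA subrK.
by apply: fin_suppD; [apply: fin_suppMl|apply: fin_suppZ].
Qed.

Lemma RkappaP x : Rk x <-> exists k, has_scalar x k.
Proof.
split=> [[k [y [fy ->]]]|[k fk]]; first by exists k; rewrite /has_scalar addrK.
by exists k, (x - k *: 1); split => //; rewrite subrK.
Qed.

Lemma RkappaC k : Rk (k *: 1).
Proof. by apply/RkappaP; exists k; apply: has_scalarC. Qed.

Lemma Rkappa1 : Rk 1.
Proof. by rewrite -(scale1r 1); apply: RkappaC. Qed.

Lemma RkappaD x y : Rk x -> Rk y -> Rk (x + y).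
Proof.
by move=> /RkappaP[k xk] /RkappaP[l yl]; apply/RkappaP; exists (k + l); apply: has_scalarD.
Qed.

Lemma RkappaN x : Rk x -> Rk (- x).
Proof. by move=> /RkappaP[k xk]; apply/RkappaP; exists (- k); apply: has_scalarN. Qed.

Lemma RkappaB x y : Rk x -> Rk y -> Rk (x - y).
Proof. by move=> Rx /RkappaN; apply: RkappaD. Qed.

Lemma RkappaM x y : Rk x -> Rk y -> Rk (x * y).
Proof.
by move=> /RkappaP[k xk] /RkappaP[l yl]; apply/RkappaP; exists (k * l); apply: has_scalarM.
Qed.

Lemma RkappaZ c x : Rk x -> Rk (c *: x).
Proof. by move=> /RkappaP[k xk]; apply/RkappaP; exists (c * k); apply: has_scalarZ. Qed.

Lemma Rkappa_is_subalgebra : is_subalgebra (Rkappa R).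
Proof. split; [exact: Rkappa1|exact: RkappaD|exact: RkappaN|exact: RkappaM|exact: RkappaZ]. Qed.

Lemma Rkappa_fin_supp x : fin_supp x -> Rk x.
Proof. by move=> fx; apply/RkappaP; exists 0; apply: has_scalar_fin_supp. Qed.

Definition dsingle (a : I) (r : R a) : P := dfwith (fun i => 0 : R i) r.

Lemma dsingle_id a (r : R a) : dsingle r a = r. Proof. exact: dfwith_in. Qed.

Lemma dsingle_out a (r : R a) i : a != i -> dsingle r i = 0.
Proof. exact: dfwith_out. Qed.

Lemma fin_supp_dsingle a (r : R a) : fin_supp (dsingle r).
Proof.
apply: (@sub_finite_set _ _ [set a]); last exact: finite_set1.
by move=> i; rewrite /supp /= ?dprodE; case: (eqVneq a i) => [<-//|ne]; rewrite dsingle_out ?eqxx.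
Qed.

Lemma Rkappa_dsingle a (r : R a) : Rk (dsingle r).
Proof. exact/Rkappa_fin_supp/fin_supp_dsingle. Qed.

Lemma dsingleD a (r s : R a) : dsingle (r + s) = dsingle r + dsingle s.
Proof.
apply: dprodP => i; case: (eqVneq a i) => [<-|ne]; first by rewrite dprodE !dsingle_id.
by rewrite dprodE !dsingle_out // addr0.
Qed.

Lemma dsingle0 a : dsingle (0 : R a) = 0.
Proof. by apply: dprodP => i; case: (eqVneq a i) => [<-|ne]; rewrite ?dsingle_id ?dsingle_out. Qed.

Lemma dsingleN a (r : R a) : dsingle (- r) = - dsingle r.
Proof.
apply: dprodP => i; case: (eqVneq a i) => [<-|ne]; first by rewrite dprodE !dsingle_id.
by rewrite dprodE !dsingle_out // oppr0.
Qed.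

Lemma dsingleMl a (r : R a) (x : P) : x * dsingle r = dsingle (x a * r).
Proof.
apply: dprodP => i; case: (eqVneq a i) => [<-|ne]; first by rewrite dprodE !dsingle_id.
by rewrite dprodE !dsingle_out // mulr0.
Qed.

Lemma dsingleMr a (r : R a) (x : P) : dsingle r * x = dsingle (r * x a).
Proof.
apply: dprodP => i; case: (eqVneq a i) => [<-|ne]; first by rewrite dprodE !dsingle_id.
by rewrite dprodE !dsingle_out // mul0r.
Qed.

Lemma Rkappa_regular : (forall i (r : R i), exists s, r = r * s * r) ->
  forall x, Rk x -> exists2 y, Rk y & x = x * y * x.
Proof.
move=> regR x /RkappaP[k xk].
pose s i (r : R i) := sval (cid (regR i r)).
pose y : P := fun i => if x i == k *: 1 then k^-1 *: 1 else s i (x i).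
exists y.
  apply/RkappaP; exists k^-1; apply: sub_finite_set xk => i.
  by rewrite /supp /= !dprodE !subr_eq0 /y; case: (x i =P k *: 1); rewrite ?eqxx.
apply: dprodP => i; rewrite !dprodE /y; case: (x i =P k *: 1) => [->|_].
  rewrite -scalerAl mul1r scalerA -scalerAl mul1r scalerA.
  by have [->|k0] := eqVneq k 0; rewrite ?mul0r // mulfV // mul1r.
exact: svalP (cid (regR i (x i))).
Qed.

Hypothesis infI : infinite_set [set: I].

Lemma has_scalar_uniq x k l : has_scalar x k -> has_scalar x l -> k = l.
Proof.
move=> xk xl; have := fin_suppD xl (fin_suppN xk).
have -> : x - l *: 1 + - (x - k *: 1) = (k - l) *: (1 : P).
  by rewrite scalerBl opprB addrC addrA subrK.
apply: contraPeq => neq fin; apply: infI; apply: sub_finite_set fin => i _.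
by rewrite /supp /= !dprodE scaler_eq0 oner_eq0 orbF subr_eq0.
Qed.

(* For [x = y + k *: 1] with [y] finitely supported this is [k], unique because
   [I] is infinite; it is junk outside [Rkappa R]. *)
Definition scalar_part (x : P) : K := xget 0 [set k | has_scalar x k].

Lemma scalar_partP x : Rk x -> has_scalar x (scalar_part x).
Proof. by move=> /RkappaP ex; apply: (xgetPex 0 ex). Qed.

Lemma scalar_part_eq x k : has_scalar x k -> scalar_part x = k.
Proof.
move=> xk; have Rx : Rk x by apply/RkappaP; exists k.
exact: (has_scalar_uniq (scalar_partP Rx) xk).
Qed.

Lemma scalar_partC k : scalar_part (k *: 1) = k.
Proof. exact/scalar_part_eq/has_scalarC. Qed.

Lemma scalar_part1 : scalar_part 1 = 1.
Proof. by rewrite -(scale1r 1) scalar_partC. Qed.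

Lemma scalar_part_fin_supp x : fin_supp x -> scalar_part x = 0.
Proof. by move/has_scalar_fin_supp/scalar_part_eq. Qed.

Lemma scalar_part0 : scalar_part 0 = 0.
Proof. exact/scalar_part_fin_supp/fin_supp0. Qed.

Lemma scalar_part_dsingle a (r : R a) : scalar_part (dsingle r) = 0.
Proof. exact/scalar_part_fin_supp/fin_supp_dsingle. Qed.

Lemma fin_supp_scalar_part0 x : Rk x -> scalar_part x = 0 -> fin_supp x.
Proof. by move=> /scalar_partP + x0; rewrite x0 /has_scalar scale0r subr0. Qed.

Section ScalarPartMorphism.
Variables x y : P.
Hypotheses (Rx : Rk x) (Ry : Rk y).

Lemma scalar_partD : scalar_part (x + y) = scalar_part x + scalar_part y.
Proof. exact: scalar_part_eq (has_scalarD (scalar_partP Rx) (scalar_partP Ry)). Qed.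

Lemma scalar_partN : scalar_part (- x) = - scalar_part x.
Proof. exact: scalar_part_eq (has_scalarN (scalar_partP Rx)). Qed.

Lemma scalar_partB : scalar_part (x - y) = scalar_part x - scalar_part y.
Proof.
exact: scalar_part_eq (has_scalarD (scalar_partP Rx) (has_scalarN (scalar_partP Ry))).
Qed.

Lemma scalar_partM : scalar_part (x * y) = scalar_part x * scalar_part y.
Proof. exact: scalar_part_eq (has_scalarM (scalar_partP Rx) (scalar_partP Ry)). Qed.

Lemma scalar_partZ c : scalar_part (c *: x) = c * scalar_part x.
Proof. exact: scalar_part_eq (has_scalarZ c (scalar_partP Rx)). Qed.

End ScalarPartMorphism.

Definition coord_ideals (X : forall i, set (R i)) :=
  forall i, is_ideal [set: R i] (X i).

Definition proper_coords (X : forall i, set (R i)) := [set i | ~ X i 1].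

Definition prod_ideal (c : Prop) (X : forall i, set (R i)) : set P :=
  [set x | [/\ Rk x, c \/ scalar_part x = 0 & forall i, X i (x i)]].

Lemma prod_ideal_sub (c c' : Prop) X Y : (c -> c') -> (forall i, X i `<=` Y i) ->
  prod_ideal c X `<=` prod_ideal c' Y.
Proof.
move=> cc' XY x [Rx cx Xx]; split=> // [|i]; last exact: XY.
by case: cx => [/cc'|]; [left|right].
Qed.

Lemma prod_ideal_subc (c c' : Prop) X : (c -> c') -> prod_ideal c X `<=` prod_ideal c' X.
Proof. by move=> cc'; apply: prod_ideal_sub => // i; apply: subset_refl. Qed.

Lemma prod_ideal_sub_dfwith c X a (M : set (R a)) : X a `<=` M ->
  prod_ideal c X `<=` prod_ideal c (dfwith X M).
Proof.
by move=> XM; apply: prod_ideal_sub => // i; case: dfwithP => // j _; apply: subset_refl.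
Qed.

Lemma coord_ideals_step X : coord_ideals X -> coord_ideals (coord_socle_step X).
Proof. by move=> iX i; apply: is_ideal_socle_step. Qed.

Lemma coord_ideals_dfwith X a (M : set (R a)) : coord_ideals X ->
  is_ideal [set: R a] M -> coord_ideals (dfwith X M).
Proof. by move=> iX iM i; case: dfwithP. Qed.

Lemma is_ideal_prod_ideal c X : coord_ideals X -> is_ideal Rk (prod_ideal c X).
Proof.
move=> iX; split.
- by move=> x [].
- split; [exact/Rkappa_fin_supp/fin_supp0|
    right; exact: scalar_part0|by move=> i; apply: is_ideal0].
- move=> x y [Rx cx Xx] [Ry cy Xy]; split; [exact: RkappaD|
    |by move=> i; exact: (is_idealD (iX i) (Xx i) (Xy i))].
  case: cx => [?|x0]; first by left.
  by case: cy => [?|y0]; [left|right; rewrite scalar_partD // x0 y0 addr0].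
- move=> x [Rx cx Xx]; split; [exact: RkappaN| |by move=> i; exact: (is_idealN (iX i) (Xx i))].
  by case: cx => [|x0]; [left|right; rewrite scalar_partN // x0 oppr0].
- move=> s x Rs [Rx cx Xx]; split; split; do ?[exact: RkappaM].
  + by case: cx => [|x0]; [left|right; rewrite scalar_partM // x0 mulr0].
  + by move=> i; exact: (is_idealMl (iX i) (s := s i) Logic.I (Xx i)).
  + by case: cx => [|x0]; [left|right; rewrite scalar_partM // x0 mul0r].
  + by move=> i; exact: (is_idealMr (iX i) (s := s i) Logic.I (Xx i)).
Qed.

Lemma prod_ideal_dsingle c X a (r : R a) : coord_ideals X ->
  prod_ideal c X (dsingle r) <-> X a r.
Proof.
move=> iX; split=> [[_ _ /(_ a)]|Xr]; first by rewrite dsingle_id.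
split; [exact: Rkappa_dsingle|right; exact: scalar_part_dsingle|move=> i].
by case: (eqVneq a i) => [<-|ne]; rewrite ?dsingle_id ?dsingle_out //; apply: is_ideal0.
Qed.

Lemma is_ideal_dsingle N a x : is_ideal Rk N -> N x -> N (dsingle (x a)).
Proof.
move=> iN Nx; have := is_idealMr iN (Rkappa_dsingle (1 : R a)) Nx.
by rewrite dsingleMl mulr1.
Qed.

Lemma is_ideal_slice N a : is_ideal Rk N -> is_ideal [set: R a] [set r | N (dsingle r)].
Proof.
move=> iN; split => //.
- by rewrite /= dsingle0; apply: is_ideal0 iN.
- by move=> r s Nr Ns; rewrite /= dsingleD; exact: (is_idealD iN Nr Ns).
- by move=> r Nr; rewrite /= dsingleN; exact: (is_idealN iN Nr).
- move=> s r _ Nr; split; rewrite /=.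
  + by have := is_idealMl iN (Rkappa_dsingle s) Nr; rewrite dsingleMl dsingle_id.
  + by have := is_idealMr iN (Rkappa_dsingle s) Nr; rewrite dsingleMr dsingle_id.
Qed.

Lemma prod_ideal_dfwith_sub c X a (Y : set (R a)) (N : set P) : coord_ideals X ->
  is_ideal Rk N -> prod_ideal c X `<=` N -> (forall r, Y r -> N (dsingle r)) ->
  prod_ideal c (dfwith X Y) `<=` N.
Proof.
move=> iX iN XN YN x [Rx cx Yx].
have -> : x = dsingle (x a) + (x - dsingle (x a)) by rewrite addrC subrK.
apply: (is_idealD iN); first by apply: YN; move: (Yx a); rewrite dfwith_in.
apply: XN; split; first exact/RkappaB/Rkappa_dsingle.
  by rewrite scalar_partB ?scalar_part_dsingle ?subr0 //; exact: Rkappa_dsingle.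
move=> i; rewrite !dprodE; case: (eqVneq a i) => [<-|ne].
  by rewrite dsingle_id subrr; apply: is_ideal0.
by rewrite dsingle_out // subr0; move: (Yx i); rewrite dfwith_out.
Qed.

Definition one_on (X : forall i, set (R i)) : P :=
  fun i => if `[< X i 1 >] then 1 else 0.

Lemma one_on_coord X i : coord_ideals X -> X i (one_on X i).
Proof. by move=> iX; rewrite /one_on; case: asboolP => // _; apply: is_ideal0. Qed.

Lemma has_scalar_one_on X : finite_set (proper_coords X) -> has_scalar (one_on X) 1.
Proof.
apply: sub_finite_set => i; rewrite /supp /= !dprodE scale1r /one_on.
by case: asboolP => // _; rewrite subrr eqxx.
Qed.

Lemma scalar_part_one_on X : finite_set (proper_coords X) -> scalar_part (one_on X) = 1.
Proof. by move/has_scalar_one_on/scalar_part_eq; apply. Qed.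

Lemma prod_ideal_one_on X : coord_ideals X -> finite_set (proper_coords X) ->
  prod_ideal True X (one_on X).
Proof.
move=> iX finX; split; [|by left|by move=> i; apply: one_on_coord].
by apply/RkappaP; exists 1; apply: has_scalar_one_on.
Qed.

Lemma prod_ideal_flag c Y : coord_ideals Y -> (c -> finite_set (proper_coords Y)) ->
  c <-> exists2 x, prod_ideal c Y x & scalar_part x != 0.
Proof.
move=> iY cfin; split=> [hc|[x [_ [//|->]] _]]; last by rewrite eqxx.
have finY := cfin hc; exists (one_on Y).
  exact: (prod_ideal_subc (fun=> hc) (prod_ideal_one_on iY finY)).
by rewrite scalar_part_one_on // oner_eq0.
Qed.

Lemma finite_coords_notin Y x : coord_ideals Y -> Rk x ->
  (scalar_part x != 0 -> finite_set (proper_coords Y)) ->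
  finite_set [set i | ~ Y i (x i)].
Proof.
move=> iY Rx finY; have xk := scalar_partP Rx.
have [k0|/finY finYc] := eqVneq (scalar_part x) 0.
  apply: sub_finite_set xk => i; apply: contra_notP => /notin_suppB ->.
  by rewrite !dprodE k0 scale0r; apply: is_ideal0.
apply: (@sub_finite_set _ _ (supp (x - scalar_part x *: 1) `|` proper_coords Y)).
  move=> i nYx; have [|/notin_suppB xi] := pselect (supp (x - scalar_part x *: 1) i).
    by left.
  by right => Y1; apply: nYx; rewrite xi !dprodE; apply: is_idealZ.
by rewrite finite_setU.
Qed.

Lemma prod_ideal_slice c X a : coord_ideals X ->
  [set r | prod_ideal c X (@dsingle a r)] = X a.
Proof. by move=> iX; apply/seteqP; split => r /=; rewrite prod_ideal_dsingle. Qed.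

Lemma finite_proper_coords X z : coord_ideals X -> Rk z -> scalar_part z != 0 ->
  (forall i, X i (z i)) -> finite_set (proper_coords X).
Proof.
move=> iX Rz z0 Xz; apply: sub_finite_set (scalar_partP Rz) => i nX1.
apply: contra_notP nX1 => /notin_suppB zi; move: (Xz i); rewrite zi !dprodE.
by move/(is_idealZ (iX i) (c := (scalar_part z)^-1) Logic.I); rewrite scalerA mulVf ?scale1r.
Qed.

Section MinimalOverProdIdeal.
(* Otherwise [X] would take its index implicitly, [X i] being a set over [R i]. *)
Local Unset Implicit Arguments.
Variables (c : Prop) (X : forall i, set (R i)).
Local Set Implicit Arguments.
Hypothesis iX : coord_ideals X.

Lemma minimal_over_prod_ideal_dfwith a (M : set (R a)) :
  minimal_over setT (X a) M ->
  minimal_over Rk (prod_ideal c X) (prod_ideal c (dfwith X M)).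
Proof.
move=> [iM [XM nMX] minM]; have iXM := coord_ideals_dfwith iX iM.
split; first exact: is_ideal_prod_ideal.
  split; first exact: prod_ideal_sub_dfwith.
  move=> sub; apply: nMX => r Mr; move: (sub (dsingle r)).
  by rewrite !prod_ideal_dsingle // dfwith_in; apply.
move=> N iN XN NM; set Na := [set r : R a | N (dsingle r)].
have XNa : X a `<=` Na by move=> r Xr; apply: XN; rewrite /= prod_ideal_dsingle.
have NaM : Na `<=` M by move=> r /NM; rewrite prod_ideal_dsingle // dfwith_in.
case: (minM Na (is_ideal_slice a iN) XNa NaM) => eNa; [left|right]; apply/seteqP; split => //.
- move=> x Nx; have [Rx cx _] := NM x Nx; split => // i.
  case: (eqVneq a i) => [<-|ne]; last by have [_ _ /(_ i)] := NM x Nx; rewrite dfwith_out.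
  by rewrite -eNa /Na /=; exact: (is_ideal_dsingle a iN Nx).
- by apply: prod_ideal_dfwith_sub => // r; rewrite -eNa.
Qed.

Section MinimalOver.
Variable M : set P.
Hypothesis minM : minimal_over Rk (prod_ideal c X) M.

Let iM : is_ideal Rk M. Proof. by case: minM. Qed.
Let XM : prod_ideal c X `<=` M. Proof. by case: minM => _ []. Qed.

Lemma minimal_over_prod_ideal_coord z a : M z -> ~ X a (z a) ->
  exists2 Ma, minimal_over setT (X a) Ma & M = prod_ideal c (dfwith X Ma).
Proof.
move=> Mz nXz; set Ma := [set r : R a | M (dsingle r)].
have iMa := is_ideal_slice a iM.
have XMa : X a `<=` Ma by move=> r Xr; apply: XM; rewrite /= prod_ideal_dsingle.
have between N : is_ideal [set: R a] N -> X a `<=` N -> N `<=` Ma ->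
    prod_ideal c (dfwith X N) = prod_ideal c X \/ prod_ideal c (dfwith X N) = M.
  move=> iN XN NMa; have [_ _ minMp] := minM.
  apply: minMp; first exact/is_ideal_prod_ideal/coord_ideals_dfwith.
    exact: prod_ideal_sub_dfwith.
  exact: prod_ideal_dfwith_sub.
have slice_dfwith N : is_ideal [set: R a] N ->
    [set r | prod_ideal c (dfwith X N) (dsingle r)] = N.
  by move=> iN; rewrite prod_ideal_slice ?dfwith_in //; apply: coord_ideals_dfwith.
have minMa : minimal_over setT (X a) Ma.
  split => //; first by split => // MaX; apply: nXz; apply: MaX; exact: (is_ideal_dsingle a iM Mz).
  move=> N iN XN NMa; case: (between N iN XN NMa) => eN; [left|right].
  + by rewrite -(slice_dfwith N iN) eN prod_ideal_slice.
  + by rewrite -(slice_dfwith N iN) eN.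
exists Ma => //; case: (between Ma iMa XMa (@subset_refl _ _)) => // eMa.
case: nXz; rewrite -(prod_ideal_slice c a iX) -eMa slice_dfwith //=.
exact: (is_ideal_dsingle a iM Mz).
Qed.

Lemma minimal_over_prod_ideal_scalar z : M z -> ~ prod_ideal c X z ->
  (forall i, X i (z i)) -> ~ c /\ M `<=` prod_ideal True X.
Proof.
move=> Mz nXz Xz; have Rz : Rk z := is_ideal_sub iM Mz.
split => [hc|]; first by apply: nXz; split => //; left.
have iT := is_ideal_prod_ideal True iX.
have [_ _ minMp] := minM.
have XMT : prod_ideal c X `<=` M `&` prod_ideal True X.
  move=> x Xx; split; first exact: XM.
  exact: (prod_ideal_subc (fun=> Logic.I) Xx).
case: (minMp _ (is_idealI iM iT) XMT (@subIsetl _ _ _)) => [eMX|<-]; last by move=> x [].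
by case: nXz; rewrite -eMX; split => //; split => //; left.
Qed.

Lemma minimal_over_prod_ideal_sub :
  M `<=` prod_ideal (c \/ finite_set (proper_coords X)) (coord_socle_step X).
Proof.
have [z Mz nXz] : exists2 z, M z & ~ prod_ideal c X z.
  have [_ [_ nMX] _] := minM; apply: contrapT => nz; apply: nMX => z Mz.
  by apply: contrapT => nXz; apply: nz; exists z.
have [[a nXa]|allX] := pselect (exists a, ~ X a (z a)).
  have [Ma minMa ->] := minimal_over_prod_ideal_coord Mz nXa.
  apply: prod_ideal_sub => [|i]; first by left.
  case: dfwithP => [|j _]; first exact: minimal_sub_socle_step (is_ideal0 (iX a)) minMa.
  exact: socle_step_infl.
have Xz i : X i (z i) by apply: contrapT => nX; apply: allX; exists i.
have [nc MT] := minimal_over_prod_ideal_scalar Mz nXz Xz.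
have z0 : scalar_part z != 0.
  by apply/eqP => z0; apply: nXz; split => //; [exact: (is_ideal_sub iM Mz)|right].
have finX := finite_proper_coords iX (is_ideal_sub iM Mz) z0 Xz.
move=> x /MT; apply: prod_ideal_sub => [_|i]; [by right|exact: socle_step_infl].
Qed.

End MinimalOver.

Lemma minimal_over_prod_ideal_full : finite_set (proper_coords X) -> ~ c ->
  minimal_over Rk (prod_ideal c X) (prod_ideal True X).
Proof.
move=> finX nc; have PT := prod_ideal_one_on iX finX.
have sc1 := scalar_part_one_on finX.
split; first exact: is_ideal_prod_ideal.
  split; first exact: prod_ideal_subc.
  by move=> /(_ _ PT) [_ [//|]]; rewrite sc1 => /eqP; rewrite oner_eq0.
move=> N iN XN NT; have [NX|] := pselect (N `<=` prod_ideal c X).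
  by left; apply/seteqP; split.
move=> /existsNP[z /not_implyP[Nz nXz]]; right; apply/seteqP; split => //.
have [Rz _ Xz] := NT z Nz.
have z0 : scalar_part z != 0 by apply/eqP => z0; apply: nXz; split => //; right.
move=> w [Rw _ Xw]; set k := scalar_part w / scalar_part z.
have -> : w = k *: z + (w - k *: z) by rewrite addrC subrK.
apply: (is_idealD iN); first exact: (is_idealZ iN (RkappaC k) Nz).
apply: XN; split; first exact/RkappaB/RkappaZ.
  by right; rewrite scalar_partB ?scalar_partZ ?divfK ?subrr //; exact: RkappaZ.
by move=> i; rewrite !dprodE; apply: (is_idealB (iX i)) => //; apply: is_idealZ.
Qed.

End MinimalOverProdIdeal.

Section SocleStepProdIdeal.
Local Unset Implicit Arguments.
Variables (c : Prop) (X : forall i, set (R i)).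
Local Set Implicit Arguments.
Hypotheses (iX : coord_ideals X) (cfin : c -> finite_set (proper_coords X)).
Local Notation J := (prod_ideal c X).

Let iJ : is_ideal Rk J := is_ideal_prod_ideal c iX.
Let istepJ : is_ideal Rk (socle_step Rk J) :=
  is_ideal_socle_step Rkappa_is_subalgebra iJ.

Lemma socle_step_dsingle a (r : R a) :
  coord_socle_step X a r -> socle_step Rk J (dsingle r).
Proof.
apply: (socle_step_ind (Q := fun r => socle_step Rk J (dsingle r))).
- by move=> r1 r2 h1 h2; rewrite dsingleD; exact: (socle_stepD iJ h1 h2).
- by move=> r1 Xr; apply: socle_step_infl; rewrite prod_ideal_dsingle.
- move=> M minM m Mm; have [iM _ _] := minM.
  apply: (minimal_sub_socle_step (is_ideal0 iJ) (minimal_over_prod_ideal_dfwith c iX minM)).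
  by rewrite prod_ideal_dsingle ?dfwith_in //; apply: coord_ideals_dfwith.
Qed.

Lemma socle_step_fin_supp x : fin_supp x ->
  (forall i, coord_socle_step X i (x i)) -> socle_step Rk J x.
Proof.
move=> /finite_seqP[s es]; have : supp x `<=` [set` s] by rewrite es.
elim: s x {es} => [|a s IH] x xs Sx.
  suff -> : x = 0 by apply: is_ideal0 istepJ.
  by apply: dprodP => i; apply/eqP; apply: contraT => xi; move: (xs i xi).
have -> : x = dsingle (x a) + (x - dsingle (x a)) by rewrite addrC subrK.
apply: (socle_stepD iJ (socle_step_dsingle (Sx a))); apply: IH => i; rewrite ?/supp /= !dprodE.
  case: (eqVneq a i) => [<-|ne]; first by rewrite dsingle_id subrr eqxx.
  by rewrite dsingle_out // subr0 => /xs; rewrite /= inE eq_sym (negbTE ne).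
case: (eqVneq a i) => [<-|ne]; last by rewrite dsingle_out // subr0.
by rewrite dsingle_id subrr; apply: is_ideal0 (coord_ideals_step iX a).
Qed.

Lemma socle_step_prod_ideal : socle_step Rk J =
  prod_ideal (c \/ finite_set (proper_coords X)) (coord_socle_step X).
Proof.
apply/seteqP; split.
  have iJ' := is_ideal_prod_ideal (c \/ finite_set (proper_coords X)) (coord_ideals_step iX).
  apply: socle_step_ind.
  - by move=> x y Jx Jy; exact: (is_idealD iJ' Jx Jy).
  - by apply: prod_ideal_sub => [?|i]; [left|apply: socle_step_infl].
  - by move=> M; apply: minimal_over_prod_ideal_sub.
move=> x [Rx cx Sx]; have [x0|xn0] := eqVneq (scalar_part x) 0.
  exact: socle_step_fin_supp (fin_supp_scalar_part0 Rx x0) Sx.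
have finX : finite_set (proper_coords X).
  by case: cx => [[/cfin|]|/eqP] //; rewrite (negbTE xn0).
have XT := prod_ideal_one_on iX finX; have [Ru _ _] := XT.
have -> : x = x * one_on X + x * (1 - one_on X) by rewrite mulrBr mulr1 addrC subrK.
apply: (socle_stepD iJ).
  have xT := is_idealMl (is_ideal_prod_ideal True iX) Rx XT.
  have [hc|nc] := pselect c; last first.
    exact: (minimal_sub_socle_step (is_ideal0 iJ) (minimal_over_prod_ideal_full iX finX nc) xT).
  apply: socle_step_infl.
  exact: (prod_ideal_subc (fun=> hc) xT).
have R1u : Rk (1 - one_on X) := RkappaB Rkappa1 Ru.
apply: socle_step_fin_supp => [|i].
  apply: (fin_supp_scalar_part0 (RkappaM Rx R1u)).
  have sc1 := scalar_part_one_on finX.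
  by rewrite (scalar_partM Rx R1u) (scalar_partB Rkappa1 Ru)
    scalar_part1 // sc1 subrr mulr0.
rewrite !dprodE /one_on; case: asboolP => _; last by rewrite subr0 mulr1.
by rewrite subrr mulr0; apply: is_ideal0 (coord_ideals_step iX i).
Qed.

End SocleStepProdIdeal.

(** * Layers and socle tower of R(kappa, K, R) *)

Section ProdLayerMap.
Local Unset Implicit Arguments.
Variables (c : Prop) (Y : forall i, set (R i)).
Variables (Lam : I -> Type) (f : forall i, R i -> Lam i -> K).
Local Set Implicit Arguments.
Hypotheses (iY : coord_ideals Y) (cfin : c -> finite_set (proper_coords Y)).
Hypothesis fY : forall i, layer_map (coord_socle_step Y i) (Y i) (f i).
Local Notation Jb := (prod_ideal (c \/ finite_set (proper_coords Y)) (coord_socle_step Y)).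
Local Notation Ja := (prod_ideal c Y).

(* Besides the coordinates of the components, one extra coordinate reads off
   the scalar part; it is needed exactly when [c] fails but [Jb] allows
   nonzero scalar parts. *)
Definition prod_layer_index :=
  ({i : I & Lam i} + (~ c /\ finite_set (proper_coords Y)))%type.

Definition prod_layer_map (x : P) (o : prod_layer_index) : K :=
  match o with inl (existT i l) => f i (x i) l | inr _ => scalar_part x end.

Let iSY := coord_ideals_step iY.

Let layer_zero i r : Y i r -> f i r = (fun _ => 0).
Proof. by move=> Yr; apply/(layer_ker (fY i)) => //; apply: socle_step_infl. Qed.

Lemma prod_layer_map_ker x : Jb x -> (prod_layer_map x = (fun _ => 0) <-> Ja x).
Proof.
move=> [Rx cx Sx]; split=> [Fx0|[_ cx' Yx]]; last first.
  apply: funext => -[[i l]|[nc _]] /=; first by rewrite (layer_zero (Yx i)).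
  by case: cx'.
have Yx i : Y i (x i).
  apply/(layer_ker (fY i) (Sx i)); apply: funext => l.
  exact: (congr1 (fun G => G (inl (Tagged Lam l))) Fx0).
split => //; have [hc|nc] := pselect c; first by left.
right; have [finY|nfinY] := pselect (finite_set (proper_coords Y)).
  exact: (congr1 (fun G => G (inr (conj nc finY))) Fx0).
by case: cx => [[]|].
Qed.

Lemma prod_layer_mapD x y : Jb x -> Jb y ->
  prod_layer_map (x + y) = (fun o => prod_layer_map x o + prod_layer_map y o).
Proof.
move=> [Rx _ Sx] [Ry _ Sy]; apply: funext => -[[i l]|_] /=.
  by rewrite (layer_add (fY i) (Sx i) (Sy i)).
exact: scalar_partD.
Qed.

Lemma prod_layer_mapZ k x : Jb x ->
  prod_layer_map (k *: x) = (fun o => k * prod_layer_map x o).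
Proof.
move=> [Rx _ Sx]; apply: funext => -[[i l]|_] /=.
  by rewrite (layer_scale (fY i) k (Sx i)).
exact: scalar_partZ.
Qed.

Lemma prod_layer_mapM x y : Jb x -> Jb y ->
  prod_layer_map (x * y) = (fun o => prod_layer_map x o * prod_layer_map y o).
Proof.
move=> [Rx _ Sx] [Ry _ Sy]; apply: funext => -[[i l]|_] /=.
  by rewrite (layer_mul (fY i) (Sx i) (Sy i)).
exact: scalar_partM.
Qed.

Lemma prod_layer_map_finsupp x : Jb x -> finsupp (prod_layer_map x).
Proof.
move=> [Rx cx Sx]; apply: finsupp_sum; last exact: finite_set_Prop.
apply: finsupp_sigma => [|i]; last exact: (layer_finsupp (fY i) (Sx i)).
apply: (@sub_finite_set _ _ [set i | ~ Y i (x i)]).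
  by move=> i [l] + Yx; rewrite /= (layer_zero Yx) eqxx.
apply: finite_coords_notin => // x0.
by case: cx => [[/cfin|]|/eqP] //; rewrite (negbTE x0).
Qed.

Lemma prod_layer_coords_surj (h : {i & Lam i} -> K) : finsupp h ->
  exists y : P, [/\ fin_supp y, forall i, coord_socle_step Y i (y i) &
                    forall i (l : Lam i), f i (y i) l = h (Tagged Lam l)].
Proof.
move=> fh; have pre_ex i : exists r, [/\ coord_socle_step Y i r,
    f i r = (fun l : Lam i => h (Tagged Lam l)) &
    (fun l : Lam i => h (Tagged Lam l)) = (fun _ => 0) -> r = 0].
  exact: (layer_map_preimage (fY i) (is_ideal0 (iSY i)) (is_ideal0 (iY i))
    (@finsupp_tagged _ _ _ _ i fh)).
pose y : P := fun i => sval (cid (pre_ex i)).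
have yP i := svalP (cid (pre_ex i)); exists y; split => [|i|i l].
- apply: sub_finite_set (finite_tags fh) => i yi; apply: contrapT => nh.
  have [_ _ y0] := yP i; move: yi; rewrite /supp /= /y y0 ?eqxx //.
  by apply: funext => l; apply: contrapT => hl; apply: nh; exists l; apply/eqP.
- by have [] := yP i.
- by have [_ -> _] := yP i.
Qed.

Lemma prod_layer_map_surj g : finsupp g -> exists2 x, Jb x & prod_layer_map x = g.
Proof.
move=> fg; have [y [fy Sy fy_g]] := prod_layer_coords_surj (finsupp_inl fg).
pose k : K := if pselect (~ c /\ finite_set (proper_coords Y)) is left e
  then g (inr e) else 0.
have k_extra : k != 0 -> ~ c /\ finite_set (proper_coords Y).
  by rewrite /k; case: pselect => // _; rewrite eqxx.
have xk : has_scalar (y + k *: one_on Y) k.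
  rewrite -[k in has_scalar _ k]add0r; apply: has_scalarD; first exact: has_scalar_fin_supp.
  have [->|/k_extra[_ finY]] := eqVneq k 0.
    by rewrite scale0r; exact/has_scalar_fin_supp/fin_supp0.
  by rewrite -[k in has_scalar _ k]mulr1; apply/has_scalarZ/has_scalar_one_on.
have S1 i : coord_socle_step Y i (one_on Y i).
  by apply: socle_step_infl; exact: (one_on_coord i iY).
exists (y + k *: one_on Y); first split.
- by apply/RkappaP; exists k.
- rewrite (scalar_part_eq xk).
  by have [->|/k_extra[_ finY]] := eqVneq k 0; [right|left; right].
- move=> i; apply: (is_idealD (iSY i) (Sy i)).
  exact: (is_idealZ (iSY i) (c := k) Logic.I (S1 i)).
apply: funext => -[[i l]|e] /=; last first.
  by rewrite (scalar_part_eq xk) /k; case: pselect => [e'|[]//]; rewrite (Prop_irrelevance e e').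
rewrite !dprodE (layer_add (fY i) (Sy i)) ?(layer_scale (fY i) k (S1 i)) /=; last first.
  exact: (is_idealZ (iSY i) (c := k) Logic.I (S1 i)).
by rewrite fy_g (layer_zero (one_on_coord i iY)) mulr0 addr0.
Qed.

Lemma layer_map_prod_ideal : layer_map Jb Ja prod_layer_map.
Proof.
split.
- exact: prod_layer_map_finsupp.
- exact: prod_layer_mapD.
- exact: prod_layer_mapZ.
- exact: prod_layer_mapM.
- exact: prod_layer_map_surj.
- exact: prod_layer_map_ker.
Qed.

End ProdLayerMap.

Lemma layer_iso_prod_ideal c (Y : forall i, set (R i)) : coord_ideals Y ->
  (c -> finite_set (proper_coords Y)) ->
  (forall i, Y i <> setT -> layer_iso (coord_socle_step Y i) (Y i)) ->
  (exists x, prod_ideal (c \/ finite_set (proper_coords Y)) (coord_socle_step Y) x /\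
             ~ prod_ideal c Y x) ->
  layer_iso (prod_ideal (c \/ finite_set (proper_coords Y)) (coord_socle_step Y))
            (prod_ideal c Y).
Proof.
move=> iY cfin layerY [x0 [Jbx0 nJax0]].
have dat i : {p : {Lam : Type & R i -> Lam -> K} |
    layer_map (coord_socle_step Y i) (Y i) (projT2 p)}.
  apply: cid; have [Lam [f fY]] := socle_step_layer_map (is_ideal0 (iY i)) (layerY i).
  by exists (existT _ Lam f).
pose Lam i := projT1 (sval (dat i)).
pose f i : R i -> Lam i -> K := projT2 (sval (dat i)).
have fY i : layer_map (coord_socle_step Y i) (Y i) (f i) := svalP (dat i).
have lmap := layer_map_prod_ideal iY cfin fY.
apply/layer_isoP; exists (prod_layer_index c Y Lam); split; last by exists (prod_layer_map f).
apply: contrapT => nL; apply: nJax0; apply/(layer_ker lmap Jbx0).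
by apply: funext => o; case: nL; constructor.
Qed.

Lemma coord_ideals_tower (Y : forall i, set (R i)) :
  (forall i, socle_tower [set: R i] (Y i)) -> coord_ideals Y.
Proof. by move=> tY i; apply: is_ideal_socle_tower (tY i). Qed.

Definition prod_of_towers (J : set P) := exists (c : Prop) (Y : forall i, set (R i)),
  [/\ J = prod_ideal c Y, forall i, socle_tower [set: R i] (Y i) &
      c -> finite_set (proper_coords Y)].

Lemma prod_of_towers0 : prod_of_towers [set 0].
Proof.
exists False, (fun i => [set 0]); split => [||[]//]; last by move=> i; apply: tower_base.
apply/seteqP; split => [x ->|x [_ _ x0]]; last by apply: dprodP => i; apply: x0.
split; [exact/Rkappa_fin_supp/fin_supp0|right; exact: scalar_part0|by []].
Qed.

Lemma prod_of_towers_step J : prod_of_towers J -> prod_of_towers (socle_step Rk J).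
Proof.
move=> [c [Y [-> tY cfin]]]; have iY := coord_ideals_tower tY.
exists (c \/ finite_set (proper_coords Y)), (coord_socle_step Y); split.
- exact: socle_step_prod_ideal.
- by move=> i; apply: tower_step.
- move=> cfin'; have finY : finite_set (proper_coords Y) by case: cfin' => // /cfin.
  by apply: sub_finite_set finY => i nS Y1; apply/nS/socle_step_infl.
Qed.

Section BigcupProdOfTowers.
Variable F : set (set P).
Hypotheses (F0 : F !=set0) (Fprod : F `<=` prod_of_towers).
Hypothesis Fchain : forall J J', F J -> F J' -> J `<=` J' \/ J' `<=` J.

Local Notation U := (\bigcup_(J in F) J).
Local Unset Implicit Arguments.
Let YU i : set (R i) := [set r | U (dsingle r)].
Local Set Implicit Arguments.
Let cU := exists2 x, U x & scalar_part x != 0.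

Let prod_of_towersP J : F J -> exists (c : Prop) (Y : forall i, set (R i)),
  [/\ J = prod_ideal c Y, coord_ideals Y, forall i, socle_tower [set: R i] (Y i) &
      c -> finite_set (proper_coords Y)].
Proof.
move=> /Fprod[c [Y [eJ tY cfin]]].
by exists c, Y; split => //; apply: coord_ideals_tower.
Qed.

Let is_ideal_F J : F J -> is_ideal Rk J.
Proof. by move=> /prod_of_towersP[c [Y [-> iY _ _]]]; apply: is_ideal_prod_ideal. Qed.

Let YU_tower i : socle_tower [set: R i] (YU i).
Proof.
set Fi := [set Z : set (R i) | exists2 J, F J & Z = [set r | J (dsingle r)]].
have -> : YU i = \bigcup_(Z in Fi) Z.
  apply/seteqP; split => [r [J FJ Jr]|r [Z [J FJ ->] Jr]]; last by exists J.
  by exists [set r | J (dsingle r)] => //; exists J.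
apply: tower_bigcup => [|Z [J /prod_of_towersP[c [Y [-> iY tY _]]] ->]].
  by have [J0 FJ0] := F0; exists [set r | J0 (dsingle r)], J0.
by rewrite prod_ideal_slice.
Qed.

Let cU_finite : cU -> finite_set (proper_coords YU).
Proof.
move=> [x [J FJ Jx] x0]; have [c [Y [eJ iY _ cfin]]] := prod_of_towersP FJ.
have /cfin finY : c by apply/(prod_ideal_flag iY cfin); exists x; rewrite -?eJ.
apply: sub_finite_set finY => i nYU1 Y1; apply: nYU1; exists J => //.
by rewrite eJ prod_ideal_dsingle.
Qed.

Let bigcup_sub_prod : U `<=` prod_ideal cU YU.
Proof.
move=> x [J FJ Jx]; split.
- exact: (is_ideal_sub (is_ideal_F FJ) Jx).
- by have [x0|xn0] := eqVneq (scalar_part x) 0; [right|left; exists x => //; exists J].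
- by move=> i; exists J => //; exact: (is_ideal_dsingle i (is_ideal_F FJ) Jx).
Qed.

Let prod_sub_bigcup : prod_ideal cU YU `<=` U.
Proof.
move=> x [Rx cx YUx].
have [J0 FJ0 J0flag] : exists2 J0, F J0 &
    (scalar_part x != 0 -> exists2 y, J0 y & scalar_part y != 0).
  have [x0|xn0] := eqVneq (scalar_part x) 0.
    by have [J0 FJ0] := F0; exists J0 => //; rewrite x0 eqxx.
  case: cx => [[y [J FJ Jy] yn0]|/eqP]; last by rewrite (negbTE xn0).
  by exists J => // _; exists y.
have [c0 [Y0 [eJ0 iY0 _ c0fin]]] := prod_of_towersP FJ0.
have finB : finite_set [set i | ~ Y0 i (x i)].
  apply: finite_coords_notin => // /J0flag yJ0.
  have hc0 : c0 by apply/(prod_ideal_flag iY0 c0fin); rewrite -eJ0.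
  exact: c0fin hc0.
have [s es] := (finite_seqP _).1 finB.
have [J [FJ J0J Js]] := chain_finite_bound (s := s) (p := fun i => dsingle (x i)) Fchain FJ0
  (fun i _ => YUx i : exists2 J, F J & J (dsingle (x i))).
exists J => //; have [c [Y [eJ iY _ cfin]]] := prod_of_towersP FJ; rewrite eJ; split => //.
  have [x0|/J0flag[y J0y yn0]] := eqVneq (scalar_part x) 0; [by right|left].
  by apply/(prod_ideal_flag iY cfin); exists y; rewrite -?eJ //; apply: J0J.
move=> i; have [is_|nis] := boolP (i \in s).
  by have := Js i is_; rewrite eJ prod_ideal_dsingle.
have Y0x : Y0 i (x i).
  by apply: contrapT => nY; move/negP: nis; apply; have : [set` s] i by rewrite -es.
have : J (dsingle (x i)) by apply: J0J; rewrite eJ0 prod_ideal_dsingle.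
by rewrite eJ prod_ideal_dsingle.
Qed.

Lemma prod_of_towers_bigcup : prod_of_towers U.
Proof.
exists cU, YU; split; [apply/seteqP; split|exact: YU_tower|exact: cU_finite].
  exact: bigcup_sub_prod.
exact: prod_sub_bigcup.
Qed.

End BigcupProdOfTowers.

Let infl := @socle_step_infl _ _ Rk.

Lemma socle_tower_prod_of_towers J : socle_tower Rk J -> prod_of_towers J.
Proof.
elim=> [|J' _ /prod_of_towers_step //|F F0 tF IH]; first exact: prod_of_towers0.
apply: prod_of_towers_bigcup => // J1 J2 /tF t1 /tF t2.
by case: (tower_total infl t1 t2); [right|left].
Qed.

Hypothesis layersR : forall i (J : set (R i)), socle_tower [set: R i] J ->
  J <> setT -> layer_iso (socle_step setT J) J.

Lemma Rkappa_socle_tower : socle_tower Rk Rk.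
Proof.
have [M tM stepM] := tower_fixpoint [set 0] infl.
have [c [Y [eM tY cfin]]] := socle_tower_prod_of_towers tM.
have iY := coord_ideals_tower tY.
have estep := socle_step_prod_ideal iY cfin; rewrite -eM stepM in estep.
have YT i : Y i = setT.
  apply: contrapT => nYT; have [r [Sr nYr]] := layer_iso_proper (layersR (tY i) nYT).
  apply: nYr; rewrite -(prod_ideal_dsingle c r iY) -eM estep.
  by rewrite prod_ideal_dsingle //; apply: coord_ideals_step.
have finY : finite_set (proper_coords Y).
  by apply: (@sub_finite_set _ _ set0) => // i nY1; case: nY1; rewrite YT.
suff eMR : M = Rk by move: tM; rewrite eMR.
apply/seteqP; split => [|x Rx]; first by rewrite eM => x [].
rewrite estep; split => // [|i]; first by left; right.
by apply: socle_step_infl; rewrite YT.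
Qed.

Lemma Rkappa_socle_layer J : socle_tower Rk J -> J `<` Rk ->
  layer_iso (socle_step Rk J) J.
Proof.
move=> tJ JRk; have [c [Y [eJ tY cfin]]] := socle_tower_prod_of_towers tJ.
have iY := coord_ideals_tower tY.
have estep := socle_step_prod_ideal iY cfin; rewrite -eJ in estep.
rewrite estep eJ; apply: layer_iso_prod_ideal => // [i /(layersR (tY i))//|].
rewrite -estep -eJ; apply: contrapT => nx.
have fixJ : socle_step Rk J = J.
  apply/seteqP; split => [x Sx|]; last exact: socle_step_infl.
  by apply: contrapT => nJx; apply: nx; exists x.
by case: JRk => _; apply; exact: (tower_fix_max infl tJ fixJ Rkappa_socle_tower).
Qed.

End ProductAlgebra.

Theorem lemma5p11 (K : fieldType) (I : pointedType) (R : I -> algType K) :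
  infinite_set [set: I] ->
  (forall i : I, in_frakR [set: R i]) ->
  in_frakR (Rkappa R).
Proof.
move=> infI frakR.
have layersR i (J : set (R i)) := @in_frakR_socle_tower_layer _ _ _ J (frakR i).
apply: socle_tower_in_frakR.
- exact: Rkappa_is_subalgebra.
- by move=> x y _ _; apply: dprodP => i; have [_ commR _ _] := frakR i; apply: commR.
- apply: Rkappa_regular => i r; have [_ _ regR _] := frakR i.
  by have [s _ rs] := regR r Logic.I; exists s.
- exact: (Rkappa_socle_tower infI layersR).
- exact: (Rkappa_socle_layer infI layersR).
Qed.
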